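(* Let $m\ge1$ and $A=(a_0,\ldots,a_m)$ real with $a_0,a_m\ne0$. Suppose $\omega\in\mathbb{C}$ satisfies $P_A(\omega)=0$ and $|\omega|>1$. Then for every $\varepsilon>0$ there exists $n_0$ such that for every $n>n_0$ the polynomial $U_{n,A}$ has a (complex) root $\xi$ with $\left|\xi-\tfrac12(\omega+\omega^{-1})\right|<\varepsilon$.
   Context: $U_k$ denotes the Chebyshev polynomial of the second kind, $U_k(\cos\theta)=\frac{\sin(k+1)\theta}{\sin\theta}$. For $A=(a_0,\ldots,a_m)$ real with $a_0,a_m\ne0$ and $n\ge m$, $U_{n,A}(x)=\sum_{i=0}^m a_iU_{n-i}(x)$ and $P_A(x)=\sum_{i=0}^m a_ix^{m-i}$. *)

From HB Require Import structures.
From mathcomp Require Import all_boot all_order all_algebra.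
Set Implicit Arguments. Unset Strict Implicit. Unset Printing Implicit Defensive.
Import Order.TTheory GRing.Theory Num.Theory.
Local Open Scope ring_scope.

(* Chebyshev polynomials of the second kind, via the standard recurrence
   U_0 = 1, U_1 = 2X, U_{k+2} = 2X U_{k+1} - U_k,
   equivalent to U_k(cos t) = sin((k+1)t)/sin t. *)
Fixpoint chebU2 (R : nzRingType) (k : nat) : {poly R} * {poly R} :=
  match k with
  | 0%N => (1, 'X *+ 2)
  | k'.+1 => let: (p, q) := chebU2 R k' in (q, 'X *+ 2 * q - p)
  end.

Definition chebU (R : nzRingType) (k : nat) : {poly R} := (chebU2 R k).1.

Definition UnA (R : nzRingType) (m : nat) (a : nat -> R) (n : nat) : {poly R} :=
  \sum_(i < m.+1) a i *: chebU R (n - i).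

Definition PA (R : nzRingType) (m : nat) (a : nat -> R) : {poly R} :=
  \sum_(i < m.+1) a i *: 'X^(m - i).

From HB Require Import structures.
From mathcomp Require Import all_boot all_order all_algebra.
From mathcomp Require Import ring zify.
Import Order.TTheory GRing.Theory Num.Theory.
Local Open Scope ring_scope.

(* Substituting x = (z + z^-1)/2 (the Joukowski map) turns the
   Chebyshev polynomials into geometric differences:
     U_k(x) (z - z^-1) = z^(k+1) - z^-(k+1),
   and hence z^(n+1) (z - z^-1) U_{n,A}(x) = F_n(z), where
     F_n = X^(2n+2-m) P_A - Q_A,   Q_A = sum_i a_i X^i  (the reversal of P_A).
   So every root rho of F_n with |rho| > 1 yields the root (rho + rho^-1)/2 of
   U_{n,A}, and the Joukowski map is 1-Lipschitz outside the unit disc.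
   It remains to show that F_n has a root near the root omega of P_A once n is
   large.  This is a discrete substitute for Rouche's theorem: if a polynomial F
   had no root in the disc of radius delta around omega, factoring F over the
   algebraically closed field gives |F(omega+tau)| <= |F(omega)| (1+tau/delta)^deg F.
   For F = F_n we have |F_n(omega)| = |Q_A(omega)|, while |F_n(omega+tau)| grows
   like |omega+tau|^N; choosing tau > 0 small with P_A(omega+tau) != 0 and
   |omega+tau| > 1 + tau/delta, the exponential growth wins for large N. *)

Lemma chebU2_joukowski {R : comNzRingType} {x z w : R} (k : nat) :
  z * w = 1 -> x *+ 2 = z + w ->
  ((chebU2 R k).1.[x] * (z - w) = z ^+ k.+1 - w ^+ k.+1) /\
  ((chebU2 R k).2.[x] * (z - w) = z ^+ k.+2 - w ^+ k.+2).
Proof.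
move=> zw x2; elim: k => [|k IH] /=.
  by rewrite !hornerE -mulr2n x2; split; ring.
case: (chebU2 R k) IH => p q /= [IH1 IH2]; split => //.
rewrite hornerD hornerN hornerM hornerMn hornerX x2 mulrBl -mulrA IH2 IH1.
have -> : z ^+ k.+1 - w ^+ k.+1 = z * w * (z ^+ k.+1 - w ^+ k.+1).
  by rewrite zw mul1r.
rewrite !exprS; ring.
Qed.

Lemma chebU_joukowski (R : comNzRingType) (x z w : R) (k : nat) :
  z * w = 1 -> x *+ 2 = z + w ->
  (chebU R k).[x] * (z - w) = z ^+ k.+1 - w ^+ k.+1.
Proof. by move=> zw x2; case: (chebU2_joukowski k zw x2). Qed.

Definition QA {R : nzRingType} (m : nat) (a : nat -> R) : {poly R} :=
  \sum_(i < m.+1) a i *: 'X^i.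

(* F_n = X^(2n+2-m) P_A - Q_A, whose roots outside the unit disc are the
   Joukowski preimages of the roots of U_{n,A}. *)
Definition FA {R : nzRingType} (m : nat) (a : nat -> R) (n : nat) : {poly R} :=
  'X^(2 * n + 2 - m) * PA m a - QA m a.

Lemma UnA_joukowski {R : comNzRingType} {m : nat} (a : nat -> R) {n : nat}
    {x z w : R} :
  (m <= n)%N -> z * w = 1 -> x *+ 2 = z + w ->
  z ^+ n.+1 * (z - w) * (UnA m a n).[x] = (FA m a n).[z].
Proof.
move=> mn zw x2.
rewrite /FA /UnA /PA /QA hornerD hornerN hornerM hornerXn !horner_sum.
rewrite mulr_sumr big_distrr /= -sumrB; apply: eq_bigr => i _.
rewrite !hornerZ !hornerXn.
rewrite (_ : _ * _ * _ = a i * (z ^+ n.+1 * ((chebU R (n - i)).[x] * (z - w))));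
  last by ring.
rewrite chebU_joukowski // [X in _ = X - _]mulrCA -mulrBr; congr (_ * _).
have im : (i <= m)%N by rewrite -ltnS.
rewrite mulrBr -exprD.
have -> : (n - i).+1 = (n.+1 - i)%N by rewrite subSn // (leq_trans im).
have -> : (n.+1 + (n.+1 - i) = 2 * n + 2 - m + (m - i))%N by lia.
congr (_ - _); first by rewrite exprD.
rewrite {1}(_ : n.+1 = i + (n.+1 - i))%N; last by lia.
by rewrite exprD -mulrA -exprMn zw expr1n mulr1.
Qed.

Lemma UnA_root_of_FA_root {R : numFieldType} {m : nat} {a : nat -> R}
    {n : nat} {rho : R} :
  (m <= n)%N -> 1 < `|rho| -> root (FA m a n) rho ->
  root (UnA m a n) ((rho + rho^-1) / 2%:R).
Proof.
move=> mn rho_gt1 /eqP F0.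
have rho0 : rho != 0 by rewrite -normr_gt0 (lt_trans ltr01).
have x2 : (rho + rho^-1) / 2%:R *+ 2 = rho + rho^-1.
  by rewrite -mulr_natr divfK ?pnatr_eq0.
have rho_inv : rho - rho^-1 != 0.
  rewrite subr_eq0; apply/eqP => eq_inv.
  have : `|rho| * `|rho| = 1 by rewrite -normrM {2}eq_inv divff ?normr1.
  apply/eqP; rewrite gt_eqF // (lt_le_trans rho_gt1) //.
  by rewrite ler_peMr // ltW.
have := UnA_joukowski a mn (divff rho0) x2; rewrite F0.
by move/eqP; rewrite !mulf_eq0 expf_eq0 (negbTE rho0) (negbTE rho_inv) andbF.
Qed.

Lemma joukowski_lipschitz {R : numFieldType} {z w : R} :
  1 <= `|z| -> 1 <= `|w| ->
  `|(z + z^-1) / 2%:R - (w + w^-1) / 2%:R| <= `|z - w|.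
Proof.
move=> z1 w1.
have z0 : z != 0 by rewrite -normr_gt0 (lt_le_trans ltr01).
have w0 : w != 0 by rewrite -normr_gt0 (lt_le_trans ltr01).
have inv_dist : `|z^-1 - w^-1| <= `|z - w|.
  rewrite (_ : z^-1 - w^-1 = (w - z) / (z * w)); last by field; rewrite ?z0 ?w0.
  rewrite normrM normfV normrM distrC ler_pdivrMr ?mulr_gt0 ?normr_gt0 //.
  by rewrite ler_peMr // mulr_ege1.
rewrite (_ : _ - _ = ((z - w) + (z^-1 - w^-1)) / 2%:R); last by field; rewrite ?z0 ?w0.
rewrite normrM normfV normr_nat ler_pdivrMr ?ltr0n //.
by rewrite (le_trans (ler_normD _ _)) // mulr_natr mulr2n lerD2l.
Qed.

Lemma bernoulli {R : numDomainType} {y : R} (N : nat) :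
  0 <= y -> 1 + N%:R * y <= (1 + y) ^+ N.
Proof.
move=> y0; elim: N => [|N IH]; first by rewrite mul0r addr0 expr0.
rewrite exprSr; apply: le_trans (ler_wpM2r _ IH); last by rewrite addr_ge0.
rewrite -subr_ge0 (_ : _ - _ = N%:R * y * y); last by rewrite mulrS; ring.
by rewrite !mulr_ge0.
Qed.

Lemma geometric_dominates {R : archiNumFieldType} {b r c K : R} :
  0 < b -> b < r -> 0 < c -> 0 <= K ->
  exists N0 : nat, forall N : nat, (N0 < N)%N -> b ^+ N * K < r ^+ N * c.
Proof.
move=> b0 br c0 K0; set y := r / b - 1.
have y0 : 0 < y by rewrite subr_gt0 ltr_pdivlMr // mul1r.
have r_eq : r = b * (1 + y) by rewrite /y addrC subrK mulrC divfK // gt_eqF.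
clearbody y.
exists (Num.Def.archi_bound (K / (y * c))) => N bound_lt_N.
have NK : K < N%:R * (y * c).
  rewrite -ltr_pdivrMr ?mulr_gt0 //; apply: lt_le_trans (archi_boundP _) _.
    by rewrite divr_ge0 // ltW // mulr_gt0.
  by rewrite ler_nat ltnW.
rewrite r_eq exprMn -mulrA ltr_pM2l ?exprn_gt0 //.
apply: (lt_le_trans NK).
apply: le_trans (ler_wpM2r (ltW c0) (bernoulli N (ltW y0))).
by rewrite mulrDl mul1r mulrA lerDr ltW.
Qed.

(* Two positive elements have a common positive lower bound (the order need
   not be total, but positive elements are comparable). *)
Lemma exists_pos_le2 {R : numDomainType} {x y : R} :
  0 < x -> 0 < y -> exists z, [/\ 0 < z, z <= x & z <= y].
Proof.
move=> x0 y0; have /orP [xy | yx] := real_leVge (gtr0_real x0) (gtr0_real y0).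
  by exists x.
by exists y.
Qed.

Lemma prod_shift_le (R : numFieldType) (om tau delta : R) (rs : seq R) :
  0 < delta -> 0 <= tau -> (forall z, z \in rs -> delta <= `|z - om|) ->
  `|\prod_(z <- rs) (om + tau - z)| <=
  `|\prod_(z <- rs) (om - z)| * (1 + tau / delta) ^+ size rs.
Proof.
move=> d0 t0; rewrite !normr_prod; elim: rs => [|z rs IH] far.
  by rewrite !big_nil expr0 mulr1.
rewrite !big_cons /= exprS mulrACA; apply: ler_pM => //.
- by rewrite prodr_ge0.
- rewrite (_ : om + tau - z = (om - z) + tau); last by ring.
  rewrite (le_trans (ler_normD _ _)) // [`|tau|]ger0_norm // mulrDr mulr1 lerD2l.
  rewrite -[X in X <= _](divfK (lt0r_neq0 d0)) mulrC.
  apply: ler_wpM2r; first exact: divr_ge0 t0 (ltW d0).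
  by rewrite distrC far // mem_head.
- by apply: IH => w wr; apply: far; rewrite in_cons wr orbT.
Qed.

(* A discrete Rouche principle: if |F| grows from omega to omega + tau by more
   than the factor (1 + tau/delta)^deg F, then F has a root within delta of
   omega; otherwise the factorization of F over the closed field bounds the
   growth. *)
Lemma root_near_of_growth {C : numClosedFieldType} {F : {poly C}}
    {om tau delta : C} :
  0 < delta -> 0 <= tau ->
  `|F.[om]| * (1 + tau / delta) ^+ (size F).-1 < `|F.[om + tau]| ->
  exists2 rho, root F rho & `|rho - om| < delta.
Proof.
move=> d0 t0 growth.
have [F0 | Fnz] := eqVneq F 0.
  by move: growth; rewrite F0 !horner0 normr0 mul0r ltxx.
have [rs Frs] := closed_field_poly_normal F.
have lcF : lead_coef F != 0 by rewrite lead_coef_eq0.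
have F_eval t : F.[t] = lead_coef F * \prod_(z <- rs) (t - z).
  rewrite {1}Frs hornerZ horner_prod.
  by under eq_bigr => z _ do rewrite hornerXsubC.
have [/hasP [rho rho_rs near] | /hasPn far] :=
  boolP (has (fun z => `|z - om| < delta) rs).
  by exists rho; rewrite // Frs rootZ // root_prod_XsubC.
have sizeF : (size F).-1 = size rs by rewrite Frs size_scale // size_prod_XsubC.
suff bounded : `|F.[om + tau]| <= `|F.[om]| * (1 + tau / delta) ^+ (size F).-1.
  by have := le_lt_trans bounded growth; rewrite ltxx.
rewrite !F_eval !normrM sizeF -mulrA ler_wpM2l ?normr_ge0 // prod_shift_le //.
by move=> z /far; rewrite real_leNgt ?(gtr0_real d0) ?normr_real.
Qed.

Lemma exists_nonroot_shift {R : numFieldType} {p : {poly R}} (om : R) {T : R} :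
  p != 0 -> 0 < T -> exists tau, [/\ 0 < tau, tau <= T & ~~ root p (om + tau)].
Proof.
move=> pnz T0; pose shifts := [seq om + T / (j.+1)%:R | j <- iota 0 (size p)].
have : ~~ all (root p) shifts.
  apply/negP => all_roots; have := max_poly_roots pnz all_roots.
  rewrite map_inj_in_uniq ?iota_uniq ?size_map ?size_iota ?ltnn //.
    by move/(_ isT).
  move=> j k _ _ /addrI /(mulfI (lt0r_neq0 T0)) /invr_inj /eqP.
  by rewrite eqr_nat => /eqP [].
case/allPn => _ /mapP [j _ ->] not_root; exists (T / (j.+1)%:R); split => //.
  by rewrite divr_gt0 ?ltr0Sn.
by rewrite ler_pdivrMr ?ltr0Sn // ler_peMr ?(ltW T0) // ler1n.
Qed.

Lemma size_sum_scaleXn_le {R : nzRingType} {k m : nat} (c : nat -> R)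
    (e : nat -> nat) :
  (forall i, (i < k)%N -> (e i <= m)%N) ->
  (size (\sum_(i < k) c i *: 'X^(e i))%R <= m.+1)%N.
Proof.
move=> e_le; apply: (big_ind (fun p : {poly R} => size p <= m.+1)%N).
- by rewrite size_poly0.
- by move=> p q sp sq; rewrite (leq_trans (size_polyD _ _)) // geq_max sp sq.
- move=> i _; rewrite (leq_trans (size_scale_leq _ _)) // size_polyXn ltnS.
  exact: e_le.
Qed.

(* The coefficient of X^m in P_A is a_0, so P_A is nonzero. *)
Lemma PA_neq0 {R : nzRingType} (m : nat) {a : nat -> R} :
  a 0%N != 0 -> PA m a != 0.
Proof.
have coef_m : (PA m a)`_m = a 0%N.
  rewrite /PA coef_sum; under eq_bigr => i _ do rewrite coefZ coefXn.
  rewrite big_ord_recl subn0 eqxx mulr1 big1 ?addr0 // => i _.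
  have i_lt_m := ltn_ord i.
  rewrite (_ : (m == m - _)%N = false) ?mulr0 //=.
  by apply/negbTE; rewrite /bump /=; lia.
by move=> a0; apply: contraNneq a0 => P0; rewrite -coef_m P0 coef0.
Qed.

Lemma size_XnM_sub_le {R : nzRingType} {m : nat} {P Q : {poly R}} (N : nat) :
  (size P <= m.+1)%N -> (size Q <= m.+1)%N ->
  ((size ('X^N * P - Q)%R).-1 <= N + m)%N.
Proof.
move=> sP sQ; rewrite -subn1 leq_subLR add1n.
apply: leq_trans (size_polyD _ _) _; rewrite size_polyN geq_max.
rewrite (leq_trans sQ) ?andbT ?ltnS ?leq_addl //.
apply: leq_trans (size_polyMleq _ _) _.
by rewrite size_polyXn addSn /= -addnS leq_add2l.
Qed.

(* Pick tau > 0 so small that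
   P(omega + tau) != 0 and |omega + tau| > b := 1 + tau/delta; then
   |(X^N P - Q)(omega + tau)| grows like |omega + tau|^N while
   |(X^N P - Q)(omega)| b^deg = |Q(omega)| b^deg grows only like b^N. *)
Lemma root_near_of_power_dominant {C : archiClosedFieldType} {m : nat}
    {P Q : {poly C}} {om delta : C} :
  P != 0 -> (size P <= m.+1)%N -> (size Q <= m.+1)%N ->
  P.[om] = 0 -> 1 < `|om| -> 0 < delta ->
  exists N0 : nat, forall N : nat, (N0 < N)%N ->
    exists2 rho, root ('X^N * P - Q) rho & `|rho - om| < delta.
Proof.
move=> Pnz sP sQ Pom om_gt1 d0.
have s0 : 0 < `|om| - 1 by rewrite subr_gt0.
have d1_gt0 : 0 < 1 + delta^-1 by rewrite addr_gt0 // invr_gt0.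
pose T := (`|om| - 1) / 2%:R / (1 + delta^-1).
have T0 : 0 < T by rewrite !divr_gt0.
have [tau [tau0 tauT Ptau]] := exists_nonroot_shift om Pnz T0.
pose b := 1 + tau / delta.
have b1 : 1 <= b by rewrite lerDl divr_ge0 // ltW.
have b0 : 0 < b := lt_le_trans ltr01 b1.
have tau_small : tau * (1 + delta^-1) < `|om| - 1.
  apply: le_lt_trans (ler_wpM2r (ltW d1_gt0) tauT) _.
  by rewrite /T divfK ?gt_eqF // ltr_pdivrMr ?ltr0n // ltr_pMr // ltr1n.
have b_lt_r : b < `|om + tau|.
  apply: lt_le_trans (lerB_normD _ _); rewrite (ger0_norm (ltW tau0)).
  rewrite -subr_gt0 (_ : _ - _ = `|om| - 1 - tau * (1 + delta^-1)).
    by rewrite subr_gt0.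
  by rewrite /b; field; rewrite gt_eqF.
have c0 : 0 < `|P.[om + tau]| by rewrite normr_gt0 -rootE.
pose K := `|Q.[om + tau]| + `|Q.[om]| * b ^+ m.
have K0 : 0 <= K by rewrite addr_ge0 ?mulr_ge0 ?exprn_ge0 ?normr_ge0 ?(ltW b0).
have [N0 dominate] := geometric_dominates b0 b_lt_r c0 K0.
exists N0 => N /dominate growth; apply: root_near_of_growth d0 (ltW tau0) _.
have size_F := size_XnM_sub_le N sP sQ.
have F_om : ('X^N * P - Q).[om] = - Q.[om].
  by rewrite hornerD hornerN hornerM Pom mulr0 add0r.
have F_shift : `|om + tau| ^+ N * `|P.[om + tau]| - `|Q.[om + tau]| <=
               `|('X^N * P - Q).[om + tau]|.
  rewrite hornerD hornerN hornerM hornerXn -normrX -normrM -(normrN Q.[_]).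
  exact: lerB_normD.
rewrite F_om normrN.
apply: le_lt_trans (ler_wpM2l (normr_ge0 _) (ler_weXn2l b1 size_F)) _.
apply: lt_le_trans F_shift; rewrite ltrBrDr; apply: le_lt_trans growth.
rewrite /K mulrDr exprD mulrCA addrC lerD2r.
by rewrite ler_peMl ?normr_ge0 ?exprn_ege1.
Qed.

(* Main theorem. *)
Theorem theorem5p2 (C : archiClosedFieldType) (m : nat) (a : nat -> C)
    (omega : C) :
  (1 <= m)%N ->
  (forall i, (i <= m)%N -> a i \is Num.real) ->
  a 0%N != 0 -> a m != 0 ->
  (PA m a).[omega] = 0 -> 1 < `|omega| ->
  forall eps : C, 0 < eps ->
  exists n0 : nat, forall n : nat, (n0 < n)%N ->
    exists xi : C, root (UnA m a n) xi /\
      `|xi - (omega + omega^-1) / 2%:R| < eps.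
Proof.
move=> _ _ a0 _ P_omega omega_gt1 eps eps0.
have gap0 : 0 < `|omega| - 1 by rewrite subr_gt0.
have [delta [delta0 delta_eps delta_gap]] := exists_pos_le2 eps0 gap0.
have size_P : (size (PA m a) <= m.+1)%N.
  by apply: (size_sum_scaleXn_le a (fun i => m - i)%N) => i _; apply: leq_subr.
have size_Q : (size (QA m a) <= m.+1)%N by apply: (size_sum_scaleXn_le a id).
have [N0 near_root] := root_near_of_power_dominant
  (PA_neq0 m a0) size_P size_Q P_omega omega_gt1 delta0.
exists (maxn m N0) => n; rewrite gtn_max => /andP [m_lt_n N0_lt_n].
have [rho F_rho rho_near] := near_root (2 * n + 2 - m)%N ltac:(lia).
have rho_gt1 : 1 < `|rho|.
  have := lerB_normD omega (rho - omega); rewrite [omega + _]addrC subrK.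
  apply: lt_le_trans.
  by rewrite ltrBrDr -ltrBrDl (lt_le_trans rho_near delta_gap).
exists ((rho + rho^-1) / 2%:R); split.
  exact: UnA_root_of_FA_root (ltnW m_lt_n) rho_gt1 F_rho.
apply: le_lt_trans (joukowski_lipschitz (ltW rho_gt1) (ltW omega_gt1)) _.
exact: lt_le_trans rho_near delta_eps.
Qed.
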